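(* For every $i\in\{1,2,3\}$, the class $\mathrm{FDir}(i)$ of D$i$-directable fuzzy automata and the class $\mathrm{CFDir}(i)$ of complete D$i$-directable fuzzy automata are closed under taking subautomata and homomorphic images. Moreover, the classes $\mathrm{CFDir}(2)$ and $\mathrm{CFDir}(3)$ are closed under finite direct products.
   Context: A fuzzy automaton is a triple $\mathcal F=(A,X,f)$ with $A$ a finite nonempty set of states, $X$ a finite nonempty alphabet, and $f:A\times X\times A\to[0,1]$, extended to words by $f^*(a,\varepsilon,a)=1$, $f^*(a,\varepsilon,b)=0$ ($b\neq a$), $f^*(a,vx,b)=\max_{c\in A}\min\{f^*(a,v,c),f(c,x,b)\}$. Let $\mathcal F(a,w)=\{b\in A\mid f^*(a,w,b)>0\}$. $\mathcal F$ is complete if $\mathcal F(a,x)\neq\emptyset$ for all $a\in A$, $x\in X$. A word $w\in X^*$ is D1-directing if there is $c\in A$ with $\mathcal F(a,w)=\{c\}$ for all $a\in A$; D2-directing if $\mathcal F(a,w)=\mathcal F(b,w)$ for all $a,b\in A$; D3-directing if there is $c\in A$ with $c\in\mathcal F(a,w)$ for all $a\in A$; $\mathcal F$ is D$i$-directable if it has a D$i$-directing word. $\mathcal G=(B,X,g)$ is a subautomaton of $\mathcal F$ if $B\subseteq A$, $\mathcal F(b,x)\subseteq B$ for all $b\in B$, $x\in X$, and $g(b,x,b')=f(b,x,b')$ for $b,b'\in B$. A surjective map $\varphi:A\to B$ is an epimorphism $\mathcal F\to\mathcal G$ if $g(\varphi(a),x,b)=\max\{f(a,x,a')\mid a'\in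 A,\ \varphi(a')=b\}$ for all $a\in A$, $b\in B$, $x\in X$ (maximum of the empty set being $0$); $\mathcal G$ is then a homomorphic image of $\mathcal F$. The direct product of $\mathcal F$ and $\mathcal G=(B,X,g)$ is $\mathcal F\times\mathcal G=(A\times B,X,h)$ with $h((a,b),x,(a',b'))=\min\{f(a,x,a'),g(b,x,b')\}$; finite direct products are obtained (up to isomorphism) by iterating this binary product. *)

From HB Require Import structures.
From mathcomp Require Import all_boot all_order all_algebra.
Set Implicit Arguments. Unset Strict Implicit. Unset Printing Implicit Defensive.
Import Order.TTheory GRing.Theory Num.Theory.
Local Open Scope ring_scope.

Section Fuzzy.
Variable R : realFieldType.

Definition fuzzy_automaton (A X : finType) (f : A -> X -> A -> R) : Prop :=
  [/\ (0 < #|A|)%N, (0 < #|X|)%N & forall a x b, 0 <= f a x b <= 1].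

(* Max of nonnegative values
   is taken with neutral element 0 (max of the empty set is 0). *)
Definition fstar (A X : finType) (f : A -> X -> A -> R) (a : A) (w : seq X)
  : A -> R :=
  foldl (fun (u : A -> R) (x : X) =>
           fun b => \big[Num.max/0]_(c : A) Num.min (u c) (f c x b))
        (fun b => (a == b)%:R) w.

Definition reach (A X : finType) (f : A -> X -> A -> R) (a : A) (w : seq X)
  : {set A} := [set b | 0 < fstar f a w b].

Definition complete (A X : finType) (f : A -> X -> A -> R) : Prop :=
  forall a x, reach f a [:: x] != set0.

Inductive dkind := D1 | D2 | D3.

Definition directing (i : dkind) (A X : finType) (f : A -> X -> A -> R)
  (w : seq X) : Prop :=
  match i with
  | D1 => exists c : A, forall a : A, reach f a w = [set c]
  | D2 => forall a b : A, reach f a w = reach f b w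
  | D3 => exists c : A, forall a : A, c \in reach f a w
  end.

Definition directable (i : dkind) (A X : finType) (f : A -> X -> A -> R) :=
  exists w : seq X, directing i f w.

Definition FDir (i : dkind) (A X : finType) (f : A -> X -> A -> R) : Prop :=
  fuzzy_automaton f /\ directable i f.

Definition CFDir (i : dkind) (A X : finType) (f : A -> X -> A -> R) : Prop :=
  FDir i f /\ complete f.

Definition subautomaton (A X : finType) (f : A -> X -> A -> R) (B : {set A})
  (g : {b : A | b \in B} -> X -> {b : A | b \in B} -> R) : Prop :=
  [/\ B != set0,
      (forall b x, b \in B -> reach f b [:: x] \subset B) &
      forall b x b', g b x b' = f (val b) x (val b')].

Definition epimorphism (A B X : finType) (f : A -> X -> A -> R)
  (g : B -> X -> B -> R) (phi : A -> B) : Prop :=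
  (forall b : B, exists a : A, phi a = b) /\
  forall a x b, g (phi a) x b = \big[Num.max/0]_(a' | phi a' == b) f a x a'.

Definition prod_aut (A B X : finType) (f : A -> X -> A -> R)
  (g : B -> X -> B -> R) : (A * B)%type -> X -> (A * B)%type -> R :=
  fun p x q => Num.min (f p.1 x q.1) (g p.2 x q.2).

Definition closed_sub
  (P : forall A X : finType, (A -> X -> A -> R) -> Prop) : Prop :=
  forall (A X : finType) (f : A -> X -> A -> R) (B : {set A})
         (g : {b : A | b \in B} -> X -> {b : A | b \in B} -> R),
    P A X f -> @subautomaton A X f B g -> P {b : A | b \in B} X g.

Definition closed_hom
  (P : forall A X : finType, (A -> X -> A -> R) -> Prop) : Prop :=
  forall (A B X : finType) (f : A -> X -> A -> R) (g : B -> X -> B -> R)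
         (phi : A -> B),
    P A X f -> epimorphism f g phi -> P B X g.

Definition closed_prod
  (P : forall A X : finType, (A -> X -> A -> R) -> Prop) : Prop :=
  forall (A B X : finType) (f : A -> X -> A -> R) (g : B -> X -> B -> R),
    P A X f -> P B X g -> P _ X (prod_aut f g).

End Fuzzy.

From mathcomp Require Import all_boot all_order all_algebra.
Set Implicit Arguments. Unset Strict Implicit. Unset Printing Implicit Defensive.
Import Order.TTheory GRing.Theory Num.Theory.
Local Open Scope ring_scope.

(* Everything is read off the crisp reachable sets F(a, w): a subautomaton
   restricts them, an epimorphism maps them forward, and a direct product
   takes their cartesian product; each of the three directability notions is
   stable under these operations on sets.  For products of complete automata,
   every F(a, w) is nonempty, so a D2- or D3-directing word stays directing
   after any prefix or suffix is added; the concatenation of directing words of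
   the two factors then directs both factors at once, hence their product. *)

Lemma bigmax_gt0 (R : realDomainType) (I : finType) (P : pred I) (F : I -> R) :
  (0 < \big[Num.max/0]_(i | P i) F i) = [exists i, P i && (0 < F i)].
Proof.
have -> : [exists i, P i && (0 < F i)] = has (fun i => P i && (0 < F i)) (index_enum I).
  by apply/existsP/hasP => [[i ?]|[i _ ?]]; exists i; rewrite ?mem_index_enum.
elim: (index_enum I) => [|i r IH]; rewrite ?big_nil ?big_cons //=.
by case: (P i); rewrite //= lt_max IH.
Qed.

Section Reach.
Variables (R : realFieldType) (A X : finType) (f : A -> X -> A -> R).

Lemma reach_nil a : reach f a [::] = [set a].
Proof. by apply/setP => b; rewrite !inE /fstar /= ltr0n lt0b eq_sym. Qed.

Lemma mem_reach_rcons a v x b :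
  (b \in reach f a (rcons v x)) = [exists c, (c \in reach f a v) && (0 < f c x b)].
Proof.
rewrite inE /fstar foldl_rcons bigmax_gt0.
by apply: eq_existsb => c; rewrite lt_min inE.
Qed.

Lemma mem_reach1 a x b : (b \in reach f a [:: x]) = (0 < f a x b).
Proof.
rewrite -[[:: x]]/(rcons [::] x) mem_reach_rcons reach_nil.
apply/existsP/idP => [[c /andP[/set1P -> //]]|fab].
by exists a; rewrite set11.
Qed.

Lemma reach_cat a v w : reach f a (v ++ w) = \bigcup_(c in reach f a v) reach f c w.
Proof.
elim/last_ind: w => [|w x IH].
  rewrite cats0; apply/setP => b; apply/idP/bigcupP => [ab|[c ac]].
    by exists b; rewrite // reach_nil set11.
  by rewrite reach_nil => /set1P ->.
apply/setP => b; rewrite -rcons_cat mem_reach_rcons IH.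
apply/existsP/bigcupP => [[d /andP[/bigcupP[c ac cd] fdb]]|[c ac]].
  by exists c => //; rewrite mem_reach_rcons; apply/existsP; exists d; rewrite cd.
rewrite mem_reach_rcons => /existsP[d /andP[cd fdb]].
by exists d; rewrite fdb andbT; apply/bigcupP; exists c.
Qed.

Lemma reach_neq0 a w : complete f -> reach f a w != set0.
Proof.
move=> fC; elim/last_ind: w => [|v x /set0Pn[c ac]].
  by rewrite reach_nil; apply/set0Pn; exists a; rewrite set11.
case/set0Pn: (fC c x) => b cb; apply/set0Pn; exists b.
by rewrite mem_reach_rcons; apply/existsP; exists c; rewrite ac -mem_reach1.
Qed.

Lemma directing_catl i u w : i <> D1 -> complete f ->
  directing i f w -> directing i f (u ++ w).
Proof.
case: i => //= _ fC.
- move=> w_dir a b; rewrite !reach_cat.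
  have bigcup_reach a' : \bigcup_(c in reach f a' u) reach f c w = reach f a w.
    apply/setP => y; apply/bigcupP/idP => [[c _]|]; first by rewrite (w_dir c a).
    by case/set0Pn: (reach_neq0 a' u fC) => c a'c; exists c; rewrite // (w_dir c a).
  by rewrite !bigcup_reach.
- case=> c w_dir; exists c => a; rewrite reach_cat.
  by case/set0Pn: (reach_neq0 a u fC) => d ad; apply/bigcupP; exists d.
Qed.

Lemma directing_catr i v w : i <> D1 -> complete f ->
  directing i f v -> directing i f (v ++ w).
Proof.
case: i => //= _ fC.
- by move=> v_dir a b; rewrite !reach_cat (v_dir a b).
- case=> c v_dir; case/set0Pn: (reach_neq0 c w fC) => d cd.
  by exists d => a; rewrite reach_cat; apply/bigcupP; exists c.
Qed.

End Reach.

Section Subautomaton.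
Variables (R : realFieldType) (A X : finType) (f : A -> X -> A -> R) (B : {set A})
  (g : {b : A | b \in B} -> X -> {b : A | b \in B} -> R).
Hypothesis gf : subautomaton f g.

Lemma reach_subset a w : a \in B -> reach f a w \subset B.
Proof.
case: gf => _ B_closed _ aB; elim/last_ind: w => [|v x IH].
  by rewrite reach_nil sub1set.
apply/subsetP => b; rewrite mem_reach_rcons => /existsP[c /andP[ac fcb]].
by apply: (subsetP (B_closed c x (subsetP IH c ac))); rewrite mem_reach1.
Qed.

Lemma mem_reach_sub b w b' : (b' \in reach g b w) = (val b' \in reach f (val b) w).
Proof.
case: gf => _ _ g_def; elim/last_ind: w b' => [|v x IH] b'.
  by rewrite !reach_nil !inE val_eqE.
rewrite !mem_reach_rcons; apply/existsP/existsP => [[c]|[c /andP[bc fcb]]].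
  by rewrite IH g_def => ?; exists (val c).
have cB : c \in B by apply: (subsetP (reach_subset v (valP b))).
by exists (exist _ c cB); rewrite IH g_def bc.
Qed.

Lemma fuzzy_automaton_sub : fuzzy_automaton f -> fuzzy_automaton g.
Proof.
case: gf => /set0Pn[b0 b0B] _ g_def [_ X_gt0 f01]; split => //.
  by apply/card_gt0P; exists (exist _ b0 b0B).
by move=> a x b; rewrite g_def.
Qed.

Lemma complete_sub : complete f -> complete g.
Proof.
move=> fC b x; case/set0Pn: (fC (val b) x) => y yb.
have yB : y \in B by apply: (subsetP (reach_subset [:: x] (valP b))).
by apply/set0Pn; exists (exist _ y yB); rewrite mem_reach_sub.
Qed.

Lemma directable_sub i : directable i f -> directable i g.
Proof.
case: gf => /set0Pn[b0 b0B] _ _ [w w_dir]; exists w.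
case: i w_dir => /= [[c w_dir]|w_dir|[c w_dir]].
- have cB : c \in B by apply: (subsetP (reach_subset w b0B)); rewrite w_dir set11.
  exists (exist _ c cB) => b; apply/setP => b'.
  by rewrite mem_reach_sub w_dir !inE -val_eqE.
- by move=> a b; apply/setP => b'; rewrite !mem_reach_sub (w_dir (val a) (val b)).
- have cB : c \in B by apply: (subsetP (reach_subset w b0B)).
  by exists (exist _ c cB) => b; rewrite mem_reach_sub.
Qed.

End Subautomaton.

Section Epimorphism.
Variables (R : realFieldType) (A B X : finType).
Variables (f : A -> X -> A -> R) (g : B -> X -> B -> R) (phi : A -> B).
Hypothesis phi_epi : epimorphism f g phi.

Lemma reach_epimorphism a w : reach g (phi a) w = phi @: reach f a w.
Proof.
case: phi_epi => _ g_def; elim/last_ind: w => [|v x IH].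
  by rewrite !reach_nil imset_set1.
apply/setP => b; rewrite mem_reach_rcons.
apply/existsP/imsetP => [[c /andP[]]|[a'' + ->]].
  rewrite IH => /imsetP[a' aa' ->]; rewrite g_def bigmax_gt0.
  case/existsP => a'' /andP[/eqP <- fa'a'']; exists a'' => //.
  by rewrite mem_reach_rcons; apply/existsP; exists a'; rewrite aa'.
rewrite mem_reach_rcons => /existsP[a' /andP[aa' fa'a'']].
exists (phi a'); rewrite IH imset_f //= g_def bigmax_gt0.
by apply/existsP; exists a''; rewrite eqxx.
Qed.

Lemma fuzzy_automaton_epimorphism : fuzzy_automaton f -> fuzzy_automaton g.
Proof.
case: phi_epi => phi_onto g_def [/card_gt0P[a0 _] X_gt0 f01]; split => //.
  by apply/card_gt0P; exists (phi a0).
move=> b x b'; case: (phi_onto b) => a <-; rewrite g_def.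
apply: (big_ind (fun y => 0 <= y <= 1)) => [|y z /andP[y0 y1] /andP[z0 z1]|a' _].
- by rewrite lexx ler01.
- by rewrite le_max ge_max y0 y1 z1.
- exact: f01.
Qed.

Lemma complete_epimorphism : complete f -> complete g.
Proof.
case: phi_epi => phi_onto _ fC b x; case: (phi_onto b) => a <-.
by rewrite reach_epimorphism imset_eq0 fC.
Qed.

Lemma directable_epimorphism i : directable i f -> directable i g.
Proof.
case: phi_epi => phi_onto _ [w w_dir]; exists w.
case: i w_dir => /= [[c w_dir]|w_dir|[c w_dir]].
- exists (phi c) => b; case: (phi_onto b) => a <-.
  by rewrite reach_epimorphism w_dir imset_set1.
- move=> b1 b2; case: (phi_onto b1) => a1 <-; case: (phi_onto b2) => a2 <-.
  by rewrite !reach_epimorphism (w_dir a1 a2).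
- exists (phi c) => b; case: (phi_onto b) => a <-.
  by rewrite reach_epimorphism imset_f.
Qed.

End Epimorphism.

Section Product.
Variables (R : realFieldType) (A B X : finType).
Variables (f : A -> X -> A -> R) (g : B -> X -> B -> R).

Lemma reach_prod a b w :
  reach (prod_aut f g) (a, b) w = setX (reach f a w) (reach g b w).
Proof.
elim/last_ind: w => [|v x IH].
  by apply/setP => -[p q]; rewrite !reach_nil in_setX !inE -pair_eqE.
apply/setP => -[p q]; rewrite in_setX !mem_reach_rcons.
apply/existsP/andP => [[[c d]]|[/existsP[c /andP[ac fcp]] /existsP[d /andP[bd gdq]]]].
  rewrite IH in_setX /prod_aut lt_min /= => /andP[/andP[ac bd] /andP[fcp gdq]].
  by split; apply/existsP; [exists c; rewrite ac | exists d; rewrite bd].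
by exists (c, d); rewrite IH in_setX ac bd /prod_aut lt_min /= fcp gdq.
Qed.

Lemma fuzzy_automaton_prod :
  fuzzy_automaton f -> fuzzy_automaton g -> fuzzy_automaton (prod_aut f g).
Proof.
case=> A_gt0 X_gt0 f01 [B_gt0 _ g01]; split => //.
  by rewrite card_prod muln_gt0 A_gt0 B_gt0.
move=> p x q; case/andP: (f01 p.1 x q.1) => f0 f1; case/andP: (g01 p.2 x q.2) => g0 _.
by rewrite /prod_aut le_min ge_min f0 g0 f1.
Qed.

Lemma complete_prod : complete f -> complete g -> complete (prod_aut f g).
Proof.
move=> fC gC [a b] x; rewrite reach_prod.
case/set0Pn: (fC a x) => p ap; case/set0Pn: (gC b x) => q bq.
by apply/set0Pn; exists (p, q); rewrite in_setX ap bq.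
Qed.

Lemma directing_prod i w :
  directing i f w -> directing i g w -> directing i (prod_aut f g) w.
Proof.
case: i => /= [[c fw] [d gw]|fw gw|[c fw] [d gw]].
- exists (c, d) => -[a b]; apply/setP => -[p q].
  by rewrite reach_prod in_setX fw gw !inE -pair_eqE.
- by move=> [a b] [a' b']; rewrite !reach_prod (fw a a') (gw b b').
- by exists (c, d) => -[a b]; rewrite reach_prod in_setX fw gw.
Qed.

Lemma directable_prod i : i <> D1 -> complete f -> complete g ->
  directable i f -> directable i g -> directable i (prod_aut f g).
Proof.
move=> iD1 fC gC [u fu] [v gv]; exists (u ++ v).
by apply: directing_prod; [apply: directing_catr | apply: directing_catl].
Qed.

End Product.

Section Classes.
Variables (R : realFieldType) (i : dkind).

Lemma FDir_closed_sub : closed_sub (@FDir R i).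
Proof.
move=> A X f B g [fF fD] gf.
by split; [apply: fuzzy_automaton_sub gf fF | exact: (directable_sub gf)].
Qed.

Lemma CFDir_closed_sub : closed_sub (@CFDir R i).
Proof.
move=> A X f B g [fFD fC] gf.
by split; [apply: FDir_closed_sub gf | apply: complete_sub gf fC].
Qed.

Lemma FDir_closed_hom : closed_hom (@FDir R i).
Proof.
move=> A B X f g phi [fF fD] phi_epi; split.
- exact: fuzzy_automaton_epimorphism phi_epi fF.
- exact: (directable_epimorphism phi_epi).
Qed.

Lemma CFDir_closed_hom : closed_hom (@CFDir R i).
Proof.
move=> A B X f g phi [fFD fC] phi_epi.
by split; [apply: FDir_closed_hom phi_epi | apply: complete_epimorphism phi_epi fC].
Qed.

Lemma CFDir_closed_prod : i <> D1 -> closed_prod (@CFDir R i).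
Proof.
move=> iD1 A B X f g [[fF fD] fC] [[gF gD] gC]; split; first split.
- exact: fuzzy_automaton_prod.
- exact: directable_prod.
- exact: complete_prod.
Qed.

End Classes.

Theorem proposition6p11 (R : realFieldType) :
  (forall i : dkind,
     [/\ closed_sub (@FDir R i), closed_sub (@CFDir R i),
         closed_hom (@FDir R i) & closed_hom (@CFDir R i)]) /\
  closed_prod (@CFDir R D2) /\ closed_prod (@CFDir R D3).
Proof.
split; first by move=> i; split;
  [exact: FDir_closed_sub | exact: CFDir_closed_sub
  | exact: FDir_closed_hom | exact: CFDir_closed_hom].
by split; exact: CFDir_closed_prod.
Qed.
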